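(* Let $\mathcal P$ be a non-empty family of subsets of a set $X$ which is closed under finite intersections and satisfies $\mathcal P\subseteq\mathcal P_{seq}$. Then the $\mathcal Q_{\mathcal P}$-topology on $X/\mathcal P$ is regular.
   Context: $[x]_{\mathcal P}=\{y\in X:\forall V\in\mathcal P\ (x\in V\iff y\in V)\}$, $X/\mathcal P=\{[x]_{\mathcal P}:x\in X\}$, $q(x)=[x]_{\mathcal P}$, and the $\mathcal Q_{\mathcal P}$-topology is the coarsest topology on $X/\mathcal P$ containing all sets $q[V]$, $V\in\mathcal P$. $\mathcal P_{seq}$ is the family of all sets $W$ for which there exist $\{U_n\}_{n\in\omega},\{V_n\}_{n\in\omega}\subseteq\mathcal P$ with $U_k\subseteq X\setminus V_k\subseteq U_{k+1}$ for every $k$ and $\bigcup_nU_n=W$. Regular spaces are assumed $T_1$. *)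

From mathcomp Require Import all_boot.
From mathcomp Require Import boolp classical_sets.
Set Implicit Arguments. Unset Strict Implicit. Unset Printing Implicit Defensive.
Local Open Scope classical_set_scope.

Section Defs.
Variable X : Type.
Variable P : set (set X).

Definition cls (x : X) : set X := [set y | forall V, P V -> (V x <-> V y)].

Definition quot : set (set X) := [set c | exists x, c = cls x].

Definition qimg (V : set X) : set (set X) := [set c | exists2 x, V x & c = cls x].

Definition is_topology (S : set (set X)) (tau : set (set (set X))) : Prop :=
  [/\ (forall A, tau A -> A `<=` S),
      tau S,
      (forall A B, tau A -> tau B -> tau (A `&` B)) &
      (forall F : set (set (set X)), F `<=` tau -> tau (\bigcup_(A in F) A))].

(* open sets of the Q_P-topology: the coarsest topology on X/P containing all q[V] *)
Definition Q_open (U : set (set X)) : Prop :=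
  forall tau, is_topology quot tau -> (forall V, P V -> tau (qimg V)) -> tau U.

Definition Q_closed (F : set (set X)) : Prop := F `<=` quot /\ Q_open (quot `\` F).

(* regular, with T1 included *)
Definition Q_regular : Prop :=
  (forall c, quot c -> Q_closed [set c]) /\
  (forall c F, quot c -> Q_closed F -> ~ F c ->
     exists U W, [/\ Q_open U, Q_open W, U c, F `<=` W & U `&` W = set0]).

Definition P_seq : set (set X) :=
  [set W | exists U V : nat -> set X,
     [/\ (forall n, P (U n) /\ P (V n)),
         (forall k, U k `<=` ~` V k /\ ~` V k `<=` U k.+1) &
         \bigcup_n U n = W]].
End Defs.

(* Every V in P is the increasing union of sets U_n in P, with U_n disjoint
   from some V_n in P whose complement lies in U_(n+1).  So a point x of V
   lies in some U = U_n, and W = V_n is a member of P that is disjoint from U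
   and covers X \ V.  In the quotient, q[U] and q[W] are disjoint open sets
   separating the class of x from the complement of the basic neighbourhood
   q[V]; this gives regularity.  The same separation shows that if every
   member of P containing y also contains x, then x and y have the same
   class, so distinct classes are told apart by some q[V], and points are
   closed. *)
From mathcomp Require Import all_boot.
From mathcomp Require Import boolp classical_sets.
Set Implicit Arguments. Unset Strict Implicit.
Local Open Scope classical_set_scope.

Section QuotientTopology.
Variables (X : Type) (P : set (set X)).
Hypothesis P_setI : forall A B, P A -> P B -> P (A `&` B).
Hypothesis P_sub_seq : P `<=` P_seq P.

Lemma cls_eq_mem x y : cls P x = cls P y -> forall V, P V -> (V x <-> V y).
Proof. by move=> e; have : cls P x y by rewrite e. Qed.

Lemma cls_ext x y : (forall V, P V -> (V x <-> V y)) -> cls P x = cls P y.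
Proof.
move=> h; apply/seteqP; split=> z H V PV.
- by rewrite -(H V PV) (h V PV).
- by rewrite -(H V PV) (h V PV).
Qed.

Lemma qimg_cls V x : P V -> qimg P V (cls P x) <-> V x.
Proof. by move=> PV; split=> [[y Vy e] | Vx]; [rewrite (cls_eq_mem e PV) | exists x]. Qed.

Lemma qimg_sub V : qimg P V `<=` quot P.
Proof. by move=> c [x _ ->]; exists x. Qed.

Lemma qimg_setI V1 V2 : P V2 -> qimg P (V1 `&` V2) = qimg P V1 `&` qimg P V2.
Proof.
move=> PV2; apply/seteqP; split=> [c [x [V1x V2x] ->] | c [[x V1x ->] /qimg_cls V2x]].
  by split; exists x.
by exists x => //; split=> //; apply/V2x.
Qed.

Lemma qimg_disjoint U W : P W -> U `<=` ~` W -> qimg P U `&` qimg P W = set0.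
Proof. by move=> PW UW; apply/seteqP; split=> // c [[x Ux ->] /(qimg_cls x PW)/(UW x Ux)]. Qed.

Lemma qimg_Q_open V : P V -> Q_open P (qimg P V).
Proof. by move=> PV tau _; apply. Qed.

Lemma Q_open_of_nbhd U :
  (forall c, U c -> exists2 V, P V & qimg P V c /\ qimg P V `<=` U) -> Q_open P U.
Proof.
move=> h tau [_ _ _ tau_bigcup] tau_qimg.
have -> : U = \bigcup_(A in [set A | exists2 V, P V & A = qimg P V /\ A `<=` U]) A.
  apply/seteqP; split=> [c /h [V PV [Vc sV]] | c [A [V _ [_ sA]] /sA //]].
  by exists (qimg P V) => //; exists V.
by apply: tau_bigcup => A [V PV [-> _]]; apply: tau_qimg.
Qed.

Definition Q_basic (B : set (set X)) := B = quot P \/ exists2 V, P V & B = qimg P V.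

(* An explicit topology containing every q[V]: since it contains every Q-open
   set, it exposes basic neighbourhoods inside them. *)
Definition Q_generated (U : set (set X)) :=
  U `<=` quot P /\ forall c, U c -> exists B, [/\ Q_basic B, B c & B `<=` U].

Lemma Q_basic_setI B1 B2 c : Q_basic B1 -> Q_basic B2 -> B1 c -> B2 c ->
  exists B, [/\ Q_basic B, B c & B `<=` B1 `&` B2].
Proof.
case=> [-> | [V1 PV1 ->]] [-> | [V2 PV2 ->]] c1 c2.
- by exists (quot P); split=> //; left.
- exists (qimg P V2); split=> //; first by right; exists V2.
  by move=> d Vd; split=> //; apply: qimg_sub Vd.
- exists (qimg P V1); split=> //; first by right; exists V1.
  by move=> d Vd; split=> //; apply: qimg_sub Vd.
exists (qimg P (V1 `&` V2)); rewrite qimg_setI //; split=> //.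
by right; exists (V1 `&` V2); [apply: P_setI | rewrite qimg_setI].
Qed.

Lemma Q_generated_topology : is_topology (quot P) Q_generated.
Proof.
split.
- by move=> A [].
- by split=> // c qc; exists (quot P); split=> //; left.
- move=> A B [sA hA] [sB hB]; split=> [c [/sA] // | c [Ac Bc]].
  have [B1 [b1 B1c s1]] := hA c Ac; have [B2 [b2 B2c s2]] := hB c Bc.
  have [B' [b' B'c sB']] := Q_basic_setI b1 b2 B1c B2c.
  by exists B'; split=> // d /sB' [/s1 ? /s2 ?].
- move=> F sF; split=> [c [A /sF [sA _] /sA //] | c [A FA Ac]].
  have [B [bB Bc sB]] := (sF A FA).2 c Ac.
  by exists B; split=> // d Bd; exists A => //; apply: sB.
Qed.

Lemma Q_open_nbhd U c : Q_open P U -> U c ->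
  quot P `<=` U \/ exists2 V, P V & qimg P V c /\ qimg P V `<=` U.
Proof.
move=> oU Uc.
have [_ h] : Q_generated U.
  apply: oU; first exact: Q_generated_topology.
  move=> V PV; split=> [|d Vd]; first exact: qimg_sub.
  by exists (qimg P V); split=> //; right; exists V.
have [B [[-> | [V PV ->]] Bc sB]] := h c Uc; first by left.
by right; exists V.
Qed.

Lemma P_separates_complement V x : P V -> V x ->
  exists U W, [/\ P U, P W, U x, U `<=` ~` W & ~` V `<=` W].
Proof.
move=> PV Vx; have [U [W [PUW UW eV]]] := P_sub_seq PV.
have [n _ Unx] : (\bigcup_n U n) x by rewrite eV.
exists (U n), (W n); split=> //; [exact: (PUW n).1 | exact: (PUW n).2 | exact: (UW n).1 |].
move=> y nVy; apply: contrapT => nWy; apply: nVy; rewrite -eV; exists n.+1 => //.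
exact: (UW n).2.
Qed.

(* Separation from complements upgrades the preorder induced by P to equality of classes. *)
Lemma cls_eq_of_mem_imply x y : (forall V, P V -> V y -> V x) -> cls P x = cls P y.
Proof.
move=> yx; apply: cls_ext => V PV; split=> [Vx | /(yx V PV) //].
have [U [W [_ PW Ux UW nVW]]] := P_separates_complement PV Vx.
by apply: contrapT => /nVW/(yx W PW)/(UW x Ux).
Qed.

Lemma Q_closed_point c : quot P c -> Q_closed P [set c].
Proof.
case=> x ->; split=> [d -> | ]; first by exists x.
apply: Q_open_of_nbhd => d [[y ->] yx].
have [V [PV Vy nVx]] : exists V, [/\ P V, V y & ~ V x].
  apply: contrapT => nV; apply/yx/esym/cls_eq_of_mem_imply => V PV Vy.
  by apply: contrapT => nVx; apply: nV; exists V.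
exists V => //; split=> [|e [z Vz ->]]; first by apply/qimg_cls.
by split=> [|xz]; [exists z | apply/nVx/(cls_eq_mem xz PV)].
Qed.

Lemma Q_separate_closed c F : quot P c -> Q_closed P F -> ~ F c ->
  exists U W, [/\ Q_open P U, Q_open P W, U c, F `<=` W & U `&` W = set0].
Proof.
case=> x -> [sF oF] nFx.
have Fx' : (quot P `\` F) (cls P x) by split; first exists x.
have [quotF | [V PV [/(qimg_cls x PV) Vx sV]]] := Q_open_nbhd oF Fx'.
  exists (quot P), set0; split=> //; last by rewrite setI0.
  - by move=> tau [].
  - by apply: Q_open_of_nbhd.
  - by exists x.
  - by move=> d Fd; have [] := quotF d (sF d Fd).
have [U [W [PU PW Ux UW nVW]]] := P_separates_complement PV Vx.
exists (qimg P U), (qimg P W); split; rewrite ?qimg_disjoint //; try exact: qimg_Q_open.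
  by apply/qimg_cls.
move=> d Fd; have [y dy] := sF d Fd; subst d; apply/qimg_cls => //; apply: nVW => Vy.
by have [_] := sV (cls P y) (proj2 (qimg_cls y PV) Vy); apply.
Qed.

End QuotientTopology.

Theorem lemma4 (X : Type) (P : set (set X)) :
  (exists V, P V) ->
  (forall A B, P A -> P B -> P (A `&` B)) ->
  P `<=` P_seq P ->
  Q_regular P.
Proof.
move=> _ P_setI P_sub_seq.
by split; [exact: Q_closed_point | exact: Q_separate_closed].
Qed.
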